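(* Let $\varphi\colon\mathbb{R}\to[0,\infty)$ be a deformed exponential and $\{u_{0,i}\}_{i\ge1}\subset(0,\infty)$. Suppose there do not exist $\alpha\in(0,1)$, $\varepsilon>0$ and a sequence $\{c_i\}\subseteq\mathbb{R}\cup\{-\infty\}$ with $\sum_{i}\varphi(c_i)<\infty$ such that for every $i$, $\alpha\varphi(u)\le\varphi(u-u_{0,i})$ for all real $u>c_i$ with $\varphi(u-u_{0,i})<\varepsilon$. Then there exist pairwise disjoint sets $A_n\subseteq\mathbb{N}$ ($n\ge1$) and real numbers $c_{n,i}$ ($n\ge1$, $i\in A_n$) such that for each $n\ge1$ \[ \frac12\le\sum_{i\in A_n}\varphi(c_{n,i})\qquad\text{and}\qquad\sum_{i\in A_n}\varphi(c_{n,i}-u_{0,i})\le 2^{-n}. \] *)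

From Stdlib Require Import Reals.
From Coquelicot Require Import Coquelicot.
Open Scope R_scope.

Definition deformed_exp (phi : R -> R) : Prop :=
  (forall u, 0 <= phi u) /\
  (forall x y t, 0 <= t <= 1 ->
     phi (t * x + (1 - t) * y) <= t * phi x + (1 - t) * phi y) /\
  is_lim phi m_infty 0 /\
  is_lim phi p_infty p_infty.

(* Sum of a (nonnegative) series, as an extended real: the limit of the
   partial sums (which for nonnegative terms is their supremum). *)
Definition nnsum (f : nat -> R) : Rbar := Lim_seq (fun N => sum_n f N).

(* Elements of R \cup {-oo}: None stands for -oo. *)
Definition phi_ext (phi : R -> R) (c : option R) : R :=
  match c with None => 0 | Some x => phi x end.

Definition above (c : option R) (u : R) : Prop :=
  match c with None => True | Some x => x < u end.

(* Fix [beta] in (0,1) and call [u] good for the index [i] when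
   [phi (u - u0 i) < beta] and [phi (u - u0 i) < beta * phi u].  The heart of
   the proof ([separating_exists]) shows that, away from any finite set [F]
   of indices, there is a finite block of indices [i] with good points [c i]
   whose masses [phi (c i)] add up to at least 1/2 and whose shifted masses
   add up to at most [beta].  If there were none, every finite choice of good
   points outside [F] would have mass below 1/2 (a heavier one could be cut
   down to mass in [1/2, 1)), so the suprema of the good points, which are
   thresholds beyond which no point is good, would have summable [phi]-values;
   with [alpha = eps = beta] this is the excluded threshold condition.
   Choosing such blocks one after another with [beta = 2^-(n+1)], each one
   avoiding all earlier ones ([disjoint_sequence]), gives the theorem. *)

From Stdlib Require Import Reals Arith Bool Lra Lia Classical ClassicalEpsilon.
From Coquelicot Require Import Coquelicot.
Open Scope R_scope.

Definition mask (S : nat -> bool) (f : nat -> R) (i : nat) : R :=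
  if S i then f i else 0.

Lemma sum_Sn_R (a : nat -> R) (n : nat) : sum_n a (S n) = sum_n a n + a (S n).
Proof. exact (sum_Sn (G := R_AbelianMonoid) a n). Qed.

Lemma sum_n_plus_R (f g : nat -> R) (N : nat) :
  sum_n (fun i => f i + g i) N = sum_n f N + sum_n g N.
Proof. exact (sum_n_plus (G := R_AbelianMonoid) f g N). Qed.

Lemma sum_n_le_loc (f g : nat -> R) (N : nat) :
  (forall i, (i <= N)%nat -> f i <= g i) -> sum_n f N <= sum_n g N.
Proof.
  induction N as [|N IH]; intros Hfg.
  - rewrite !sum_O. apply Hfg; lia.
  - rewrite !sum_Sn_R. apply Rplus_le_compat; [apply IH; intros i Hi|]; apply Hfg; lia.
Qed.

Lemma sum_n_nonneg_mono (f : nat -> R) (N M : nat) :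
  (forall i, 0 <= f i) -> (N <= M)%nat -> sum_n f N <= sum_n f M.
Proof.
  intros Hf HNM; induction HNM as [|M _ IH]; [lra|].
  rewrite sum_Sn_R. specialize (Hf (S M)). lra.
Qed.

Lemma sum_n_support (f : nat -> R) (N M : nat) :
  (forall i, (N < i)%nat -> f i = 0) -> (N <= M)%nat -> sum_n f M = sum_n f N.
Proof.
  intros Hf HNM; induction HNM as [|M HNM IH]; [reflexivity|].
  rewrite sum_Sn_R, IH, (Hf (S M)) by lia. apply Rplus_0_r.
Qed.

Lemma sum_n_support_bound (f : nat -> R) (N M : nat) :
  (forall i, 0 <= f i) -> (forall i, (N < i)%nat -> f i = 0) ->
  sum_n f M <= sum_n f N.
Proof.
  intros Hpos Hf. destruct (le_lt_dec M N) as [HMN|HNM].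
  - now apply sum_n_nonneg_mono.
  - rewrite (sum_n_support f N M); [lra| exact Hf| lia].
Qed.

Lemma mask_support (S : nat -> bool) (f : nat -> R) (N : nat) :
  (forall i, S i = true -> (i <= N)%nat) -> forall i, (N < i)%nat -> mask S f i = 0.
Proof.
  intros HS i Hi. unfold mask. destruct (S i) eqn:Si; [|reflexivity].
  specialize (HS i Si). lia.
Qed.

Lemma nnsum_finite_support (f : nat -> R) (N : nat) :
  (forall i, (N < i)%nat -> f i = 0) -> nnsum f = Finite (sum_n f N).
Proof.
  intros Hf. unfold nnsum. rewrite <- (Lim_seq_const (sum_n f N)).
  apply Lim_seq_ext_loc. exists N. intros M HM. now apply sum_n_support.
Qed.

Lemma nnsum_bounded (f : nat -> R) (B : R) :
  (forall N, sum_n f N <= B) -> Rbar_lt (nnsum f) p_infty.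
Proof.
  intros HB.
  assert (Hle : Rbar_le (nnsum f) (Finite B)).
  { unfold nnsum. rewrite <- (Lim_seq_const B).
    apply Lim_seq_le_loc. exists O. intros N _. apply HB. }
  destruct (nnsum f); simpl in *; tauto.
Qed.

Lemma sum_n_crosses_half (a : nat -> R) (N : nat) :
  (forall i, a i < 1/2) -> 1/2 <= sum_n a N -> exists K, 1/2 <= sum_n a K < 1.
Proof.
  intros Ha. induction N as [|N IH]; intros HN.
  - rewrite sum_O in HN. specialize (Ha O). lra.
  - destruct (Rle_lt_dec (1/2) (sum_n a N)) as [Hhalf|Hlow]; [now apply IH|].
    exists (S N). rewrite sum_Sn_R in *. specialize (Ha (S N)). lra.
Qed.

Lemma sum_n_lower_shift (f g : nat -> R) (d : R) (N : nat) :
  (forall i, (i <= N)%nat -> g i - d <= f i) -> sum_n g N - INR (S N) * d <= sum_n f N.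
Proof.
  induction N as [|N IH]; intros Hgf.
  - rewrite !sum_O. specialize (Hgf O (le_n O)). rewrite INR_1. lra.
  - rewrite !sum_Sn_R, (S_INR (S N)).
    assert (sum_n g N - INR (S N) * d <= sum_n f N) by (apply IH; intros; apply Hgf; lia).
    specialize (Hgf (S N) (le_n _)). lra.
Qed.

Lemma sum_n_mask_single (f : nat -> R) (i : nat) :
  sum_n (mask (fun j => Nat.eqb j i) f) i = f i.
Proof.
  unfold mask. destruct i as [|i].
  - now rewrite sum_O.
  - rewrite sum_Sn_R, Nat.eqb_refl.
    rewrite (sum_n_ext_loc _ (fun _ => 0)), sum_n_const.
    + rewrite Rmult_0_r. apply Rplus_0_l.
    + intros j Hj. destruct (Nat.eqb_spec j (S i)); [lia| reflexivity].
Qed.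

Section DeformedExponential.

Variable phi : R -> R.
Hypothesis Hphi : deformed_exp phi.

(* Convexity on [s - t, s, s + 1] bounds the left increment at [s]
   by [t] times the right slope. *)
Lemma phi_left_increment (s t : R) :
  0 < t -> phi s - phi (s - t) <= t * (phi (s + 1) - phi s).
Proof.
  intros Ht. destruct Hphi as [_ [Hconv _]].
  assert (Hl : 0 <= / (1 + t) <= 1).
  { split; [apply Rlt_le, Rinv_0_lt_compat; lra|].
    rewrite <- Rinv_1. apply Rinv_le_contravar; lra. }
  pose proof (Hconv (s - t) (s + 1) (/ (1 + t)) Hl) as Hs.
  replace (/ (1 + t) * (s - t) + (1 - / (1 + t)) * (s + 1)) with s in Hs
    by (field; lra).
  apply Rmult_le_compat_l with (r := 1 + t) in Hs; [|lra].
  replace ((1 + t) * (/ (1 + t) * phi (s - t) + (1 - / (1 + t)) * phi (s + 1)))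
    with (phi (s - t) + t * phi (s + 1)) in Hs by (field; lra).
  lra.
Qed.

Lemma phi_left_continuous (s d : R) :
  0 < d -> exists t, 0 < t /\ phi s - d < phi (s - t).
Proof.
  intros Hd. set (D := Rabs (phi (s + 1) - phi s)).
  assert (HD : 0 <= D) by apply Rabs_pos.
  exists (d / (D + 1)). split; [apply Rdiv_lt_0_compat; lra|].
  pose proof (phi_left_increment s (d / (D + 1)) ltac:(apply Rdiv_lt_0_compat; lra)).
  assert (d / (D + 1) * (phi (s + 1) - phi s) <= d / (D + 1) * D).
  { apply Rmult_le_compat_l; [apply Rlt_le, Rdiv_lt_0_compat; lra| apply Rle_abs]. }
  assert (d / (D + 1) * D < d).
  { apply Rmult_lt_reg_r with (D + 1); [lra|]. field_simplify; nra. }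
  lra.
Qed.

(* A convex function tending to [0] at [-oo] is nondecreasing: a strict
   decrease on [x, y] would force [phi >= phi x > 0] on all of [-oo, x]. *)
Lemma phi_nondecreasing (x y : R) : x <= y -> phi x <= phi y.
Proof.
  destruct Hphi as [Hnn [Hconv [Hm _]]].
  intros Hxy. apply Rnot_lt_le; intros Hdec.
  assert (Hlt : x < y) by (destruct Hxy as [|<-]; [assumption| lra]).
  apply is_lim_spec in Hm.
  assert (Hpos : 0 < phi x - 0) by (specialize (Hnn y); lra).
  destruct (Hm (mkposreal _ Hpos)) as [m Hm']. simpl in Hm'.
  set (z := Rmin m x - 1).
  assert (Hzx : z < x) by (unfold z; pose proof (Rmin_r m x); lra).
  assert (Hz : Rabs (phi z - 0) < phi x - 0)
    by (apply Hm'; unfold z; pose proof (Rmin_l m x); lra).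
  rewrite Rminus_0_r in Hz. apply Rabs_def2 in Hz.
  set (l := (y - x) / (y - z)).
  assert (Hl : 0 < l <= 1).
  { unfold l; split; [apply Rdiv_lt_0_compat; lra|].
    apply Rmult_le_reg_r with (y - z); [lra|]. field_simplify; lra. }
  pose proof (Hconv z y l ltac:(lra)) as Hc.
  replace (l * z + (1 - l) * y) with x in Hc by (unfold l; field; lra).
  nra.
Qed.

Lemma phi_sup_approx (E : R -> Prop) (s d : R) :
  is_lub E s -> 0 < d -> exists u, E u /\ phi s - d < phi u.
Proof.
  intros [_ Hleast] Hd.
  destruct (phi_left_continuous s d Hd) as [t [Ht Hst]].
  assert (Hu : exists u, E u /\ s - t < u).
  { apply NNPP; intros Hnone. assert (s <= s - t); [|lra].
    apply Hleast. intros u Eu. apply Rnot_lt_le. intros Hu. apply Hnone; eauto. }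
  destruct Hu as [u [Eu Hu]]. exists u; split; [assumption|].
  pose proof (phi_nondecreasing (s - t) u ltac:(lra)). lra.
Qed.

Lemma phi_eventually_above (b : R) : exists M, forall v, M < v -> b < phi v.
Proof.
  destruct Hphi as [_ [_ [_ Hp]]]. apply is_lim_spec in Hp. exact (Hp b).
Qed.

End DeformedExponential.

Definition threshold_condition (phi : R -> R) (u0 : nat -> R) : Prop :=
  exists (alpha eps : R) (c : nat -> option R),
    0 < alpha < 1 /\ 0 < eps /\
    Rbar_lt (nnsum (fun i => phi_ext phi (c i))) p_infty /\
    forall i u, above (c i) u -> phi (u - u0 i) < eps ->
      alpha * phi u <= phi (u - u0 i).

Definition bounded_set (S : nat -> bool) : Prop :=
  exists N, forall i, S i = true -> (i <= N)%nat.

Lemma phi_ext_nonneg (phi : R -> R) (c : option R) :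
  deformed_exp phi -> 0 <= phi_ext phi c.
Proof. intros Hphi. destruct c; simpl; [apply Hphi| lra]. Qed.

Section Block.

Variables (phi : R -> R) (u0 : nat -> R) (beta : R) (F : nat -> bool).
Hypothesis Hphi : deformed_exp phi.
Hypothesis Hbeta : 0 < beta < 1.

Definition good (i : nat) (u : R) : Prop :=
  phi (u - u0 i) < beta /\ phi (u - u0 i) < beta * phi u.

Definition admissible (S : nat -> bool) (N : nat) (c : nat -> R) : Prop :=
  forall i, S i = true -> (i <= N)%nat /\ F i = false /\ good i (c i).

Definition separating (S : nat -> bool) (N : nat) (c : nat -> R) : Prop :=
  (forall i, S i = true -> (i <= N)%nat /\ F i = false) /\
  1/2 <= sum_n (mask S (fun i => phi (c i))) N /\
  sum_n (mask S (fun i => phi (c i - u0 i))) N <= beta.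

Lemma admissible_shifted_mass (S : nat -> bool) (N : nat) (c : nat -> R) :
  admissible S N c ->
  sum_n (mask S (fun i => phi (c i - u0 i))) N <=
  beta * sum_n (mask S (fun i => phi (c i))) N.
Proof.
  intros Hadm.
  rewrite <- (sum_n_mult_l (K := R_Ring)).
  apply sum_n_le_loc. intros i _. unfold mask; simpl.
  destruct (S i) eqn:Si.
  - destruct (Hadm i Si) as [_ [_ [_ Hgood]]]. unfold mult; simpl; lra.
  - unfold mult; simpl; lra.
Qed.

Lemma admissible_separating (S : nat -> bool) (N : nat) (c : nat -> R) :
  admissible S N c -> 1/2 <= sum_n (mask S (fun i => phi (c i))) N <= 1 ->
  separating S N c.
Proof.
  intros Hadm Hmass. split; [|split; [apply Hmass|]].
  - intros i Si. destruct (Hadm i Si) as [HiN [HFi _]]. tauto.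
  - pose proof (admissible_shifted_mass S N c Hadm). nra.
Qed.

(* Any admissible selection of mass at least [1/2] yields a separating
   one: either a single point is already heavy, or some initial segment
   of the selection has mass in [1/2, 1). *)
Lemma admissible_heavy (S : nat -> bool) (N : nat) (c : nat -> R) :
  admissible S N c -> 1/2 <= sum_n (mask S (fun i => phi (c i))) N ->
  exists S' N' c', separating S' N' c'.
Proof.
  intros Hadm Hmass.
  destruct (classic (exists i, S i = true /\ 1/2 <= phi (c i))) as [[i [Si Hi]]|Hlight].
  - destruct (Hadm i Si) as [_ [HFi [Hshift _]]].
    exists (fun j => Nat.eqb j i), i, c. split; [|split].
    + intros j Hj. apply Nat.eqb_eq in Hj. subst. split; [lia| exact HFi].
    + now rewrite sum_n_mask_single.
    + rewrite sum_n_mask_single. lra.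
  - destruct (sum_n_crosses_half (mask S (fun i => phi (c i))) N) as [K HK];
      [| exact Hmass|].
    { intros i. unfold mask. destruct (S i) eqn:Si; [|lra].
      apply Rnot_le_lt. intros Hi. apply Hlight. eauto. }
    exists (fun j => (S j && Nat.leb j K)%bool), K, c.
    assert (Hprefix : sum_n (mask (fun j => (S j && Nat.leb j K)%bool) (fun i => phi (c i))) K =
                      sum_n (mask S (fun i => phi (c i))) K).
    { apply sum_n_ext_loc. intros j Hj. unfold mask.
      apply Nat.leb_le in Hj. now rewrite Hj, andb_true_r. }
    apply admissible_separating; [|lra].
    intros j Hj. apply andb_prop in Hj. destruct Hj as [Sj Hj].
    apply Nat.leb_le in Hj. destruct (Hadm j Sj) as [_ HFg]. tauto.
Qed.

Definition threshold (i : nat) (ci : option R) : Prop :=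
  (forall u, above ci u -> phi (u - u0 i) < beta -> beta * phi u <= phi (u - u0 i)) /\
  (forall s, ci = Some s -> forall d, 0 < d -> exists u, good i u /\ phi s - d < phi u).

(* The supremum of the good points of [i] (or [-oo] if there are none) is a
   threshold; it is finite because [phi (u - u0 i) < beta] bounds [u]. *)
Lemma thresholds_exist : exists c : nat -> option R, forall i, threshold i (c i).
Proof.
  apply (choice threshold). intros i.
  destruct (classic (exists u, good i u)) as [Hex|Hnone].
  - destruct (phi_eventually_above phi Hphi beta) as [M HM].
    destruct (completeness (good i)) as [s Hs]; [|exact Hex|].
    { exists (M + u0 i). intros u [Hu _]. apply Rnot_lt_le. intros HMu.
      specialize (HM (u - u0 i) ltac:(lra)). lra. }
    exists (Some s). split.
    + intros u Hsu Hu. apply Rnot_lt_le. intros Hratio.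
      destruct Hs as [Hub _]. specialize (Hub u (conj Hu Hratio)). simpl in Hsu. lra.
    + intros s' Hs' d Hd. injection Hs' as <-. exact (phi_sup_approx phi Hphi _ s d Hs Hd).
  - exists None. split.
    + intros u _ Hu. apply Rnot_lt_le. intros Hratio. apply Hnone. exists u. now split.
    + discriminate.
Qed.

(* If no separating block exists, the thresholds outside [F] carry total
   mass at most [1]: approximating each [phi (c i)] from good points within
   [1 / (2 (N + 1))] would otherwise give an admissible selection of mass
   at least [1/2]. *)
Lemma thresholds_light (c : nat -> option R) :
  (~ exists S N c', separating S N c') ->
  (forall i, threshold i (c i)) ->
  forall N, sum_n (mask (fun i => negb (F i)) (fun i => phi_ext phi (c i))) N <= 1.
Proof.
  intros Hnone Happrox N. apply Rnot_lt_le. intros Hheavy.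
  set (d := / (2 * INR (S N))).
  assert (HN : 0 < INR (S N)) by apply lt_0_INR, Nat.lt_0_succ.
  assert (Hd : 0 < d) by (unfold d; apply Rinv_0_lt_compat; lra).
  assert (HNd : INR (S N) * d = 1/2) by (unfold d; field; lra).
  set (S := fun i => (Nat.leb i N && match c i with Some _ => negb (F i) | None => false end)%bool).
  assert (Hpts : forall i, exists u, forall s, c i = Some s ->
                   good i u /\ phi s - d < phi u).
  { intros i. destruct (c i) as [s|] eqn:Hci.
    - destruct (proj2 (Happrox i) s Hci d Hd) as [u Hu]. exists u. intros s' [= <-]. exact Hu.
    - exists 0. intros s Hs. discriminate. }
  apply choice in Hpts. destruct Hpts as [u Hu].
  apply Hnone. apply (admissible_heavy S N u).
  - intros i Si. unfold S in Si. apply andb_prop in Si. destruct Si as [HiN Si].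
    apply Nat.leb_le in HiN. destruct (c i) as [s|] eqn:Hci; [|discriminate].
    split; [exact HiN| split; [now destruct (F i)|]]. now apply (Hu i s).
  - pose proof (sum_n_lower_shift (mask S (fun i => phi (u i)))
      (mask (fun i => negb (F i)) (fun i => phi_ext phi (c i))) d N) as Hshift.
    enough (Hterm : forall i, (i <= N)%nat ->
              mask (fun i => negb (F i)) (fun i => phi_ext phi (c i)) i - d <=
              mask S (fun i => phi (u i)) i) by (specialize (Hshift Hterm); lra).
    intros i HiN. unfold mask, S. apply Nat.leb_le in HiN. rewrite HiN.
    destruct (c i) as [s|] eqn:Hci, (F i); simpl; try lra.
    destruct (Hu i s Hci). lra.
Qed.


(* Without the threshold condition a separating block exists: otherwise
   the thresholds of [thresholds_exist] would witness that condition with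
   [alpha = eps = beta], their sum being finite by [thresholds_light] (the
   finitely many indices of [F] contribute a fixed finite amount). *)
Lemma separating_exists :
  ~ threshold_condition phi u0 -> bounded_set F -> exists S N c, separating S N c.
Proof.
  intros Hno [NF HF]. apply NNPP. intros Hnone.
  destruct thresholds_exist as [c Hc].
  set (g := fun i => phi_ext phi (c i)).
  assert (Hg : forall i, 0 <= g i) by (intros i; apply phi_ext_nonneg, Hphi).
  apply Hno. exists beta, beta, c. split; [lra| split; [lra| split]].
  - apply (nnsum_bounded g (sum_n (mask F g) NF + 1)). intros N.
    rewrite (sum_n_ext g (fun i => mask F g i + mask (fun i => negb (F i)) g i))
      by (intros i; unfold mask; destruct (F i); simpl; ring).
    rewrite sum_n_plus_R.
    pose proof (thresholds_light c Hnone Hc N) as Hlight. fold g in Hlight.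
    enough (sum_n (mask F g) N <= sum_n (mask F g) NF) by lra.
    apply sum_n_support_bound; [|exact (mask_support F g NF HF)].
    intros i; unfold mask; destruct (F i); [apply Hg| lra].
  - intros i u. apply (Hc i).
Qed.

End Block.

Lemma separating_block (phi : R -> R) (u0 : nat -> R) (beta : R) (F : nat -> bool) :
  deformed_exp phi -> 0 < beta < 1 -> ~ threshold_condition phi u0 -> bounded_set F ->
  exists (S : nat -> bool) (c : nat -> R),
    bounded_set S /\ (forall i, S i = true -> F i = false) /\
    Rbar_le (Finite (1/2)) (nnsum (mask S (fun i => phi (c i)))) /\
    Rbar_le (nnsum (mask S (fun i => phi (c i - u0 i)))) (Finite beta).
Proof.
  intros Hphi Hbeta Hno HF.
  destruct (separating_exists phi u0 beta F Hphi Hbeta Hno HF)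
    as [S [N [c [HS [Hmass Hshift]]]]].
  assert (HSN : forall i, S i = true -> (i <= N)%nat) by (intros i Si; apply HS, Si).
  exists S, c. split; [exists N; exact HSN|].
  split; [intros i Si; apply HS, Si|].
  rewrite !(nnsum_finite_support _ N) by (apply mask_support, HSN).
  split; assumption.
Qed.

Fixpoint taken (g : nat -> (nat -> bool) -> nat -> bool) (n : nat) : nat -> bool :=
  match n with
  | O => fun _ => false
  | S k => fun i => (taken g k i || g k (taken g k) i)%bool
  end.

Section DisjointBlocks.

Variable Q : nat -> (nat -> bool) -> Prop.
Variable g : nat -> (nat -> bool) -> nat -> bool.
Hypothesis Hg : forall n F, bounded_set F ->
  bounded_set (g n F) /\ (forall i, g n F i = true -> F i = false) /\ Q n (g n F).

Lemma taken_bounded (n : nat) : bounded_set (taken g n).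
Proof.
  induction n as [|n [N HN]]; [exists O; discriminate|].
  destruct (Hg n (taken g n) (ex_intro _ N HN)) as [[M HM] _].
  exists (Nat.max N M). intros i Hi. simpl in Hi. apply orb_prop in Hi.
  destruct Hi as [Hi|Hi]; [specialize (HN i Hi)| specialize (HM i Hi)]; lia.
Qed.

Lemma taken_contains (n m i : nat) :
  (n < m)%nat -> g n (taken g n) i = true -> taken g m i = true.
Proof.
  intros Hnm Hi. induction Hnm as [|m _ IH]; simpl; rewrite ?Hi, ?IH;
    [apply orb_true_r| reflexivity].
Qed.

Lemma blocks_disjoint (n m i : nat) :
  n <> m -> g n (taken g n) i = true -> g m (taken g m) i = false.
Proof.
  assert (Hlt : forall n m, (n < m)%nat ->
            g n (taken g n) i = true -> g m (taken g m) i = false).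
  { intros n' m' Hnm Hi. destruct (g m' (taken g m') i) eqn:Hm; [|reflexivity].
    destruct (Hg m' _ (taken_bounded m')) as [_ [Hdisj _]].
    specialize (Hdisj i Hm). rewrite (taken_contains n' m' i Hnm Hi) in Hdisj.
    discriminate. }
  intros Hnm Hi. destruct (proj1 (Nat.lt_gt_cases n m) Hnm) as [Hnm'|Hmn]; [exact (Hlt n m Hnm' Hi)|].
  destruct (g m (taken g m) i) eqn:Hm; [|reflexivity].
  rewrite (Hlt m n Hmn Hm) in Hi. discriminate.
Qed.

End DisjointBlocks.

Lemma disjoint_sequence (Q : nat -> (nat -> bool) -> Prop) :
  (forall n F, bounded_set F -> exists S,
     bounded_set S /\ (forall i, S i = true -> F i = false) /\ Q n S) ->
  exists A : nat -> nat -> bool,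
    (forall n m i, n <> m -> A n i = true -> A m i = false) /\ (forall n, Q n (A n)).
Proof.
  intros Hstep.
  assert (Hchoice : forall nF : nat * (nat -> bool), exists S, bounded_set (snd nF) ->
            bounded_set S /\ (forall i, S i = true -> snd nF i = false) /\ Q (fst nF) S).
  { intros [n F]. destruct (classic (bounded_set F)) as [HF|HF].
    - destruct (Hstep n F HF) as [S HS]. exists S. intros _. exact HS.
    - exists F. intros HF'. contradiction. }
  apply choice in Hchoice. destruct Hchoice as [g0 Hg0].
  set (g := fun n F => g0 (n, F)).
  assert (Hg : forall n F, bounded_set F ->
            bounded_set (g n F) /\ (forall i, g n F i = true -> F i = false) /\ Q n (g n F))
    by (intros n F; exact (Hg0 (n, F))).
  exists (fun n => g n (taken g n)). split.
  - intros n m i. exact (blocks_disjoint Q g Hg n m i).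
  - intros n. apply (Hg n), (taken_bounded Q g Hg).
Qed.

Definition good_block (phi : R -> R) (u0 : nat -> R) (n : nat)
    (S : nat -> bool) (c : nat -> R) : Prop :=
  Rbar_le (Finite (1 / 2)) (nnsum (mask S (fun i => phi (c i)))) /\
  Rbar_le (nnsum (mask S (fun i => phi (c i - u0 i)))) (Finite (/ 2 ^ n)).

Lemma half_pow_bounds (n : nat) : 0 < / 2 ^ S n < 1 /\ / 2 ^ S n <= / 2 ^ n.
Proof.
  pose proof (pow_lt 2 n ltac:(lra)). pose proof (pow_R1_Rle 2 n ltac:(lra)).
  simpl. split; [split|].
  - apply Rinv_0_lt_compat. lra.
  - rewrite <- Rinv_1. apply Rinv_lt_contravar; lra.
  - apply Rinv_le_contravar; lra.
Qed.

Lemma good_block_exists (phi : R -> R) (u0 : nat -> R) :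
  deformed_exp phi -> ~ threshold_condition phi u0 ->
  forall n F, bounded_set F -> exists S, bounded_set S /\
    (forall i, S i = true -> F i = false) /\ exists c, good_block phi u0 n S c.
Proof.
  intros Hphi Hno n F HF. destruct (half_pow_bounds n) as [Hbeta Hle].
  destruct (separating_block phi u0 _ F Hphi Hbeta Hno HF)
    as [S [c [HS [HSF [Hmass Hshift]]]]].
  exists S. split; [exact HS| split; [exact HSF|]]. exists c.
  split; [exact Hmass|]. eapply Rbar_le_trans; [exact Hshift| exact Hle].
Qed.

Theorem mainTheorem10 (phi : R -> R) (u0 : nat -> R)
  (Hphi : deformed_exp phi)
  (Hu0 : forall i, 0 < u0 i)
  (Hno : ~ exists (alpha eps : R) (c : nat -> option R),
           0 < alpha < 1 /\ 0 < eps /\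
           Rbar_lt (nnsum (fun i => phi_ext phi (c i))) p_infty /\
           forall i u, above (c i) u -> phi (u - u0 i) < eps ->
             alpha * phi u <= phi (u - u0 i)) :
  exists (A : nat -> nat -> bool) (c : nat -> nat -> R),
    (forall n m i, (1 <= n)%nat -> (1 <= m)%nat -> n <> m ->
        A n i = true -> A m i = false) /\
    (forall n, (1 <= n)%nat ->
       Rbar_le (Finite (1 / 2))
         (nnsum (fun i => if A n i then phi (c n i) else 0)) /\
       Rbar_le (nnsum (fun i => if A n i then phi (c n i - u0 i) else 0))
         (Finite (/ 2 ^ n))).
Proof.
  destruct (disjoint_sequence (fun n S => exists c, good_block phi u0 n S c)
              (good_block_exists phi u0 Hphi Hno)) as [A [Hdisj Hblocks]].
  destruct (choice (fun n => good_block phi u0 n (A n)) Hblocks) as [c Hc].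
  exists A, c. split.
  - intros n m i _ _. apply Hdisj.
  - intros n _. apply Hc.
Qed.
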